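(* Let $\mathcal M_{A,B,\partial}$ be an $M$-pair. Every $\partial$-boundary homologically essential element of $B$ is $\partial_B$-homologically essential. The number of $\partial$-boundary homologically essential elements of degree $k$ equals $\dim\partial_*\big(H_{k+1}(\mathbb E(A),\mathbb E(B),\partial)\big)$.
   Context: $\mathbb E$ is a field. $A=\{a_1\prec\dots\prec a_N\}$ is a finite linearly ordered set with grading $\deg:A\to\mathbb Z$, $\mathbb E(A)$ the graded vector space with basis $A$. An $M$-differential on $\mathbb E(A)$ is a degree $-1$ linear map $\partial$ with $\partial^2=0$ and $\partial(a_i)\in\mathrm{span}\{a_1,\dots,a_{i-1}\}$. For $B\subset A$ with $\partial(\mathbb E(B))\subset\mathbb E(B)$, $\mathcal M_{A,B,\partial}$ is an $M$-pair and $\partial_B=\partial|_{\mathbb E(B)}$ is an $M$-differential on $\mathbb E(B)$ (with induced order and grading). For an $M$-complex $\mathcal M_{A,\partial}$, equivalence means conjugation by a graded automorphism preserving each $\mathrm{span}\{a_1,\dots,a_i\}$; an $M$-differential is elementary if each basis element maps to $0$ or to a single basis element, and no two basis elements map to the same basis element; every $M$-differential $\partial$ is equivalent to a unique elementary $\partial_1$ (Barannikov); $a_i,a_j$ form a $\partial$-pair if $\partial_1(a_i)=a_j$, and an element is $\partial$-homologically essential if it lies in no $\partial$-pair. Let $B=\{b_1\prec\dots\prec b_K\}$, $B^k=\{b_1,\dots,b_k\}$, $\iota_*:H_*(\mathbb E(B^k),\partial_B)\to H_*(\mathbb E(B),\partial_B)$ induced by inclusion, and $\partial_*:H_{*+1}(\mathbb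 E(A),\mathbb E(B),\partial)\to H_*(\mathbb E(B),\partial_B)$ the connecting map of the long exact sequence of the pair. Set $I_k=\iota_*H_*(\mathbb E(B^k),\partial_B)\cap\partial_*H_*(\mathbb E(A),\mathbb E(B),\partial)$, $I_0=0$. An element $b_k$ is $\partial$-boundary homologically essential if $I_k\ne I_{k-1}$. *)

From HB Require Import structures.
From mathcomp Require Import all_boot all_order all_algebra.
Set Implicit Arguments.
Unset Strict Implicit.
Unset Printing Implicit Defensive.
Import GRing.Theory.
Local Open Scope ring_scope.

(* A = {a_1 < ... < a_N} is encoded as 'I_N (a_{i+1} <-> i),
   with the natural order of ordinals.  E(A) is the space of row vectors
   'rV[F]_N; a linear map f is the matrix M with  f v = v *m M, so the row
   M i is the coordinate vector of f(a_i): M i j = coefficient of a_j in f(a_i). *)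

Definition Mdiff (F : fieldType) (n : nat) (deg : 'I_n -> int) (D : 'M[F]_n) : Prop :=
  [/\ D *m D = 0,
      forall i j, D i j != 0 -> (j < i)%N &
      forall i j, D i j != 0 -> deg j = deg i - 1].

Definition flag_graded_aut (F : fieldType) (n : nat) (deg : 'I_n -> int) (P : 'M[F]_n) : Prop :=
  [/\ P \in unitmx,
      forall i j, P i j != 0 -> (j <= i)%N &
      forall i j, P i j != 0 -> deg j = deg i].

Definition elementary (F : fieldType) (n : nat) (D : 'M[F]_n) : Prop :=
  (forall i, (forall j, D i j = 0) \/
             exists j, D i j = 1 /\ forall j', j' != j -> D i j' = 0) /\
  (forall i i' j, D i j = 1 -> D i' j = 1 -> i = i').

(* a_i, a_j form a D-pair: the (unique, by Barannikov) elementary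
   differential D1 equivalent to D satisfies D1(a_i) = a_j *)
Definition Mpair (F : fieldType) (n : nat) (deg : 'I_n -> int) (D : 'M[F]_n)
    (i j : 'I_n) : Prop :=
  exists (P D1 : 'M[F]_n),
    [/\ flag_graded_aut deg P, D1 = invmx P *m D *m P, elementary D1 & D1 i j = 1].

Definition essential (F : fieldType) (n : nat) (deg : 'I_n -> int) (D : 'M[F]_n)
    (i : 'I_n) : Prop :=
  ~ (exists j, Mpair deg D i j \/ Mpair deg D j i).

Definition spanS (F : fieldType) (n : nat) (S : {set 'I_n}) : 'M[F]_n :=
  diag_mx (\row_i (i \in S)%:R).

Definition spanSd (F : fieldType) (n : nat) (deg : 'I_n -> int) (S : {set 'I_n}) (d : int)
  : 'M[F]_n := spanS F [set i in S | deg i == d].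

(* B = {b_1 < ... < b_K} with the induced order: b_{k+1} = enum_val k
   (enum B lists B in increasing order). *)
Definition subdiff (F : fieldType) (n : nat) (B : {set 'I_n}) (D : 'M[F]_n)
  : 'M[F]_#|B| := \matrix_(i, j) D (enum_val i) (enum_val j).

Definition subdeg (n : nat) (deg : 'I_n -> int) (B : {set 'I_n}) : 'I_#|B| -> int :=
  fun i => deg (enum_val i).

Definition initB (n : nat) (B : {set 'I_n}) (k : nat) : {set 'I_n} :=
  [set x in take k (enum B)].

(* Homology is encoded through the correspondence theorem: a subspace of
   H_*(E(B)) = Z(B)/Bd(B) is represented by its preimage in Z(B).
   - Z(B^k) = E(B^k) ∩ ker D ; preimage of iota_* H(E(B^k)) is Z(B^k) + Bd(B);
   - Bd(B) = D(E(B));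
   - preimage of im partial_* = { D x | x in E(A), D x in E(B) } = im D ∩ E(B).
   Ipre k is the preimage of I_k (Ipre 0 = Bd(B), i.e. I_0 = 0). *)
Definition Ipre (F : fieldType) (n : nat) (D : 'M[F]_n) (B : {set 'I_n}) (k : nat) : 'M[F]_n :=
  (((spanS F (initB B k) :&: kermx D) + spanS F B *m D) :&: (D :&: spanS F B))%MS.

(* b_{k+1} is D-boundary homologically essential: I_{k+1} <> I_k *)
Definition bd_essential (F : fieldType) (n : nat) (D : 'M[F]_n) (B : {set 'I_n})
    (k : 'I_#|B|) : bool :=
  ~~ (Ipre D B k.+1 == Ipre D B k)%MS.

(* dim partial_*(H_{d+1}(E(A),E(B))) inside H_d(E(B)) :
   preimage in Z_d(B) is (D(E_{d+1}(A)) ∩ E_d(B)) + D(E_{d+1}(B)),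
   and we subtract dim Bd_d(B) = dim D(E_{d+1}(B)). *)
Definition conn_image_dim (F : fieldType) (n : nat) (deg : 'I_n -> int) (D : 'M[F]_n)
    (B : {set 'I_n}) (d : int) : nat :=
  (\rank ((spanSd F deg setT (d + 1) *m D :&: spanSd F deg B d)
          + spanSd F deg B (d + 1) *m D)%MS
   - \rank (spanSd F deg B (d + 1) *m D))%N.

Arguments subdeg [n] deg B _.
Arguments bd_essential [F n] D B k.

From HB Require Import structures.
From mathcomp Require Import all_boot all_order all_algebra zify.
Set Implicit Arguments.
Unset Strict Implicit.
Unset Printing Implicit Defensive.
Import GRing.Theory.
Local Open Scope ring_scope.

(* Passing from B^k to B^{k+1} adds the single basis vector b_{k+1}, so (the
   preimage of) I_{k+1} has codimension at most one over I_k.  All spaces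
   involved are graded and b_{k+1} is homogeneous, so a jump can only happen in
   degree deg b_{k+1}; the number of jumps in degree d thus telescopes to
   dim (I_K)_d - dim (I_0)_d, the dimension of the degree-d part of the image
   of the connecting map.
   If b_{k+1} lay in a d_B-pair, write d_B in a Barannikov basis q_1, ..., q_K
   (q_i in E(B^i), with nonzero b_i-coordinate).  If b_{k+1} is the source of
   the pair, d_B q_{k+1} = q_j is independent of the other d_B q_i, so no cycle
   of E(B^{k+1}) involves q_{k+1}; if it is the target, q_{k+1} = d_B q_j is a
   boundary.  Either way the cycles of E(B^{k+1}) are those of E(B^k) up to
   boundaries, and I_{k+1} = I_k. *)

Section CoordinateSpans.

Variables (F : fieldType) (n : nat).
Implicit Types S T : {set 'I_n}.

Lemma mulmx_spanSE m (A : 'M[F]_(m, n)) S i j :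
  (A *m spanS F S) i j = if j \in S then A i j else 0.
Proof. by rewrite /spanS mul_mx_diag !mxE; case: (j \in S); rewrite ?mulr1 ?mulr0. Qed.

Lemma sub_spanS m (A : 'M[F]_(m, n)) S :
  (A <= spanS F S)%MS <-> (forall i j, j \notin S -> A i j = 0).
Proof.
split=> [/submxP[X ->] i j /negbTE jS | A0]; first by rewrite mulmx_spanSE jS.
suff <- : A *m spanS F S = A by apply: submxMl.
by apply/matrixP=> i j; rewrite mulmx_spanSE; case: ifPn => // /A0->.
Qed.

Lemma mulmx_spanS_id m (A : 'M[F]_(m, n)) S :
  (A <= spanS F S)%MS -> A *m spanS F S = A.
Proof.
by move/sub_spanS=> A0; apply/matrixP=> i j; rewrite mulmx_spanSE; case: ifPn => // /A0->.
Qed.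

Lemma spanS_mul S T : spanS F S *m spanS F T = spanS F (S :&: T).
Proof.
apply/matrixP=> i j; rewrite mulmx_spanSE /spanS !mxE inE.
by have [<- | _] := eqVneq i j; case: (i \in T); rewrite ?andbT ?andbF ?mul0rn ?if_same.
Qed.

Lemma spanSS S T : S \subset T -> (spanS F S <= spanS F T)%MS.
Proof. by move/setIidPl <-; rewrite -spanS_mul submxMl. Qed.

Lemma spanS0 : spanS F (set0 : {set 'I_n}) = 0.
Proof. by apply/matrixP=> i j; rewrite /spanS !mxE inE mul0rn. Qed.

Lemma spanST : spanS F [set: 'I_n] = 1%:M.
Proof. by apply/matrixP=> i j; rewrite /spanS !mxE inE. Qed.

Lemma spanS_setU1 S b :
  (spanS F (b |: S) <= spanS F S + (delta_mx 0 b : 'rV[F]_n))%MS.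
Proof.
apply/row_subP=> i; rewrite /spanS row_diag_mx mxE in_setU1.
have [-> | _] /= := eqVneq i b; first by rewrite scale1r addsmxSr.
have [iS | _] := boolP (i \in S); last by rewrite scale0r sub0mx.
rewrite scale1r (submx_trans _ (addsmxSl _ _)) //.
by have := row_sub i (spanS F S); rewrite /spanS row_diag_mx mxE iS scale1r.
Qed.

End CoordinateSpans.

Definition subcodim1 (F : fieldType) m1 m2 n (X : 'M[F]_(m1, n)) (Y : 'M[F]_(m2, n)) :=
  (X <= Y)%MS && (\rank Y <= (\rank X).+1)%N.
Arguments subcodim1 {F m1 m2 n} X%_MS Y%_MS.

Section SubCodim1.

Variables (F : fieldType) (m1 m2 n : nat) (X : 'M[F]_(m1, n)) (Y : 'M[F]_(m2, n)).
Hypothesis XY : subcodim1 X Y.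

Lemma subcodim1_adds m3 (C : 'M[F]_(m3, n)) : subcodim1 (X + C) (Y + C).
Proof.
case/andP: XY => sXY rXY; rewrite /subcodim1 addsmxS //=.
have := mxrank_sum_cap Y C; have := mxrank_sum_cap X C.
have := mxrankS (capmxS sXY (submx_refl C)); lia.
Qed.

Lemma subcodim1_cap m3 (C : 'M[F]_(m3, n)) : subcodim1 (X :&: C) (Y :&: C).
Proof.
case/andP: XY => sXY rXY; rewrite /subcodim1 capmxS //=.
have := mxrank_sum_cap Y C; have := mxrank_sum_cap X C.
have := mxrankS (addsmxS sXY (submx_refl C)); lia.
Qed.

Lemma subcodim1_mulmx p (M : 'M[F]_(n, p)) : subcodim1 (X *m M) (Y *m M).
Proof.
case/andP: XY => sXY rXY; rewrite /subcodim1 submxMr //=.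
have := mxrank_mul_ker Y M; have := mxrank_mul_ker X M.
have := mxrankS (capmxS sXY (submx_refl (kermx M))); lia.
Qed.

End SubCodim1.

Lemma subcodim1_spanS_setU1 (F : fieldType) n (S : {set 'I_n}) b :
  subcodim1 (spanS F S) (spanS F (b |: S)).
Proof.
rewrite /subcodim1 spanSS ?subsetUr //=.
apply: leq_trans (mxrankS (spanS_setU1 F S b)) _.
apply: leq_trans (mxrank_adds_leqif _ _) _.
by rewrite mxrank_delta addn1.
Qed.

Section InitialSegments.

Variables (n : nat) (B : {set 'I_n}).

Lemma initB0 : initB B 0 = set0.
Proof. by apply/setP=> x; rewrite !inE take0. Qed.

Lemma initB_card : initB B #|B| = B.
Proof. by apply/setP=> x; rewrite inE cardE take_size mem_enum. Qed.

Lemma initB_sub k : initB B k \subset B.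
Proof. by apply/subsetP=> x; rewrite inE => /mem_take; rewrite mem_enum. Qed.

Lemma initB_subS k : initB B k \subset initB B k.+1.
Proof. by apply/subsetP=> x; rewrite !inE -(take_takel _ (leqnSn k)) => /mem_take. Qed.

Lemma mem_initB (k : 'I_#|B|) m : (enum_val k \in initB B m) = (k < m)%N.
Proof.
rewrite inE in_take ?mem_enum ?enum_valP //.
by rewrite (enum_val_nth (enum_val k)) index_uniq ?enum_uniq // -cardE ltn_ord.
Qed.

Lemma initBS (k : 'I_#|B|) : initB B k.+1 = enum_val k |: initB B k.
Proof.
apply/setP=> x; rewrite !inE (take_nth (enum_val k)) ?mem_rcons ?in_cons.
  by rewrite -enum_val_nth.
by rewrite -cardE ltn_ord.
Qed.

End InitialSegments.

Definition flagmx (F : fieldType) K m : 'M[F]_K := spanS F [set i : 'I_K | (i < m)%N].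

Definition flag_cycles (F : fieldType) K (DB : 'M[F]_K) m : 'M[F]_K :=
  (flagmx F K m :&: kermx DB)%MS.

Section Flag.

Variables (F : fieldType) (K : nat).

Lemma flagmx_mul_trig (P : 'M[F]_K) m :
  (forall i j, P i j != 0 -> (j <= i)%N) -> (flagmx F K m *m P <= flagmx F K m)%MS.
Proof.
move=> Ptrig; apply/sub_spanS=> i j; rewrite inE -leqNgt => mj.
rewrite /flagmx /spanS mul_diag_mx !mxE inE.
have [im | _] := ltnP i m; last by rewrite mul0r.
have [-> | /Ptrig ji] := eqVneq (P i j) 0; first by rewrite mulr0.
by have := leq_trans im (leq_trans mj ji); rewrite ltnn.
Qed.

Lemma flagmx_mul_invmx (P : 'M[F]_K) m :
    P \in unitmx -> (forall i j, P i j != 0 -> (j <= i)%N) ->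
  (flagmx F K m *m invmx P <= flagmx F K m)%MS.
Proof.
move=> Punit Ptrig; have LP := flagmx_mul_trig m Ptrig.
have LLP : (flagmx F K m <= flagmx F K m *m P)%MS.
  by rewrite -(mxrank_leqif_sup LP).2 mxrankMfree // row_free_unit.
by apply: submx_trans (submxMr _ LLP) _; rewrite mulmxK.
Qed.

Lemma flagmx_split_row (y : 'rV[F]_K) (k : 'I_K) :
  (y <= flagmx F K k.+1)%MS -> y = y *m flagmx F K k + y 0 k *: delta_mx 0 k.
Proof.
rewrite /flagmx => /sub_spanS y0; apply/rowP=> l.
rewrite mxE mulmx_spanSE !mxE inE /= -val_eqE /=.
have [lk | kl | /val_inj->] := ltngtP l k.
- by rewrite mulr0 addr0.
- by rewrite mulr0 addr0 y0 // inE -leqNgt.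
- by rewrite mulr1 add0r.
Qed.

End Flag.

Section Elementary.

Variables (F : fieldType) (K : nat) (D1 : 'M[F]_K).
Hypothesis D1el : elementary D1.

Lemma elementary_row i j : D1 i j = 1 -> row i D1 = delta_mx 0 j.
Proof.
case: D1el => rowD1 _ Dij; apply/rowP=> l; rewrite !mxE /=.
case: (rowD1 i) => [D1i0 | [j' [Dij' Dil]]].
  by move: Dij; rewrite D1i0 => /esym/eqP; rewrite oner_eq0.
have <- : j' = j.
  apply: contraTeq isT => jj'; move: Dij.
  by rewrite Dil 1?eq_sym // => /esym/eqP; rewrite oner_eq0.
by have [-> | /Dil] := eqVneq l j'.
Qed.

Lemma elementary_col i j i' : D1 i j = 1 -> i' != i -> D1 i' j = 0.
Proof.
case: D1el => rowD1 colD1 Dij i'i.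
case: (rowD1 i') => [-> // | [j' [Di'j' Di'l]]].
have [jj' | /Di'l //] := eqVneq j j'.
by rewrite -jj' in Di'j'; rewrite (colD1 _ _ _ Di'j' Dij) eqxx in i'i.
Qed.

End Elementary.

Section PairedIndices.

Variables (F : fieldType) (K : nat) (DB P D1 : 'M[F]_K).
Hypotheses (DB2 : DB *m DB = 0) (Punit : P \in unitmx).
Hypothesis Ptrig : forall i j, P i j != 0 -> (j <= i)%N.
Hypotheses (D1E : D1 = invmx P *m DB *m P) (D1el : elementary D1).

Lemma flag_cycles_paired (k j : 'I_K) :
  D1 k j = 1 \/ D1 j k = 1 -> (flag_cycles DB k.+1 <= flag_cycles DB k + DB)%MS.
Proof.
move=> kj; apply/row_subP=> r; set x := row r _.
have xL : (x <= flagmx F K k.+1)%MS := submx_trans (row_sub r _) (capmxSl _ _).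
have xDB : x *m DB = 0 := sub_kermxP (submx_trans (row_sub r _) (capmxSr _ _)).
set Q := invmx P; set y := x *m P.
have yL : (y <= flagmx F K k.+1)%MS := submx_trans (submxMr P xL) (flagmx_mul_trig _ Ptrig).
set t := y *m flagmx F K k *m Q.
have tL : (t <= flagmx F K k)%MS.
  exact: submx_trans (submxMr Q (submxMl _ _)) (flagmx_mul_invmx _ Punit Ptrig).
(* [y] holds the coordinates of [x] in the basis of the rows of [Q]. *)
have xE : x = t + y 0 k *: row k Q.
  by rewrite -[x in LHS](mulmxK Punit) -/y {1}(flagmx_split_row yL) mulmxDl -scalemxAl -rowE.
case: kj => [Dkj | Djk].
  have yD1 : y *m D1 = 0 by rewrite D1E !mulmxA mulmxK // xDB mul0mx.
  have yk : y 0 k = 0.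
    move/(congr1 (fun v : 'rV_K => v 0 j)): yD1; rewrite /= [RHS]mxE [LHS]mxE.
    rewrite (bigD1 k) //= Dkj mulr1 big1 ?addr0 // => i ik.
    by rewrite (elementary_col D1el Dkj ik) mulr0.
  apply: submx_trans (addsmxSl _ _); rewrite sub_capmx.
  by rewrite {1}xE yk scale0r addr0 tL; apply/sub_kermxP.
have Qk : row k Q = row j Q *m DB.
  have QDB : Q *m DB = D1 *m Q by rewrite D1E mulmxK.
  by rewrite -row_mul QDB row_mul (elementary_row D1el Djk) -rowE.
rewrite xE addmx_sub_adds //; last by rewrite Qk scalemxAl submxMl.
rewrite sub_capmx tL; apply/sub_kermxP.
have -> : t = x - y 0 k *: row k Q by rewrite xE addrK.
by rewrite mulmxBl xDB Qk -scalemxAl -mulmxA DB2 mulmx0 scaler0 subrr.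
Qed.

End PairedIndices.

Lemma spanS_mulmx_closed (F : fieldType) n (D : 'M[F]_n) (B : {set 'I_n}) :
  (forall i j, i \in B -> D i j != 0 -> j \in B) -> (spanS F B *m D <= spanS F B)%MS.
Proof.
move=> Bclosed; apply/sub_spanS=> i j jB; rewrite /spanS mul_diag_mx !mxE.
have [iB | _] := boolP (i \in B); last by rewrite mul0r.
have [-> | /(Bclosed _ _ iB) jB'] := eqVneq (D i j) 0; first by rewrite mulr0.
by rewrite jB' in jB.
Qed.

Definition degproj (F : fieldType) n (deg : 'I_n -> int) (P : pred int) : 'M[F]_n :=
  spanS F [set i | P (deg i)].

Definition IpreS (F : fieldType) n (D : 'M[F]_n) (B S : {set 'I_n}) : 'M[F]_n :=
  (((spanS F S :&: kermx D) + spanS F B *m D) :&: (D :&: spanS F B))%MS.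

Section Filtration.

Variables (F : fieldType) (n : nat) (deg : 'I_n -> int) (D : 'M[F]_n) (B : {set 'I_n}).
Hypothesis Ddeg : forall i j, D i j != 0 -> deg j = deg i - 1.
Hypothesis DD : D *m D = 0.
Hypothesis Bclosed : forall i j, i \in B -> D i j != 0 -> j \in B.
Implicit Types (S : {set 'I_n}) (P : pred int).
Local Notation proj := (degproj F deg).

Lemma degproj_mulmx_comm (P Q : pred int) :
  (forall e, P (e + 1) = Q e) -> proj P *m D = D *m proj Q.
Proof.
move=> PQ; apply/matrixP=> i j; rewrite /degproj /spanS mul_diag_mx mul_mx_diag !mxE !inE.
have [-> | /Ddeg Dij] := eqVneq (D i j) 0; first by rewrite mulr0 mul0r.
by rewrite -PQ Dij subrK mulrC.
Qed.

Lemma degprojC P S : proj P *m spanS F S = spanS F S *m proj P.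
Proof. by rewrite /degproj !spanS_mul setIC. Qed.

Lemma degproj_id P : proj P *m proj P = proj P.
Proof. by rewrite /degproj spanS_mul setIid. Qed.

Lemma submx_degproj_split m (X : 'M[F]_(m, n)) P :
  (X <= X *m proj P + X *m proj (predC P))%MS.
Proof.
have PC : proj P + proj (predC P) = 1%:M.
  apply/matrixP=> i j; rewrite /degproj /spanS !mxE !inE.
  by case: (P (deg i)); rewrite /= mul0rn ?addr0 ?add0r.
by rewrite -[X in (X <= _)%MS]mulmx1 -PC mulmxDr addmx_sub_adds.
Qed.

Lemma ker_degproj P : (kermx D *m proj P <= kermx D)%MS.
Proof.
apply/sub_kermxP.
by rewrite -mulmxA (degproj_mulmx_comm (fun=> erefl)) mulmxA mulmx_ker mul0mx.
Qed.

Lemma mulmx_degproj P : D *m proj P = proj (fun e => P (e - 1)) *m D.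
Proof. by rewrite (degproj_mulmx_comm (Q := P)) // => e; rewrite addrK. Qed.

Lemma spanS_mulmx_degproj S P :
  (spanS F S *m D *m proj P <= spanS F S *m D)%MS.
Proof. by rewrite -mulmxA mulmx_degproj mulmxA -degprojC -mulmxA submxMl. Qed.

Lemma IpreS_degproj S P :
  (IpreS D B S *m proj P <= IpreS D B (S :&: [set i | P (deg i)]))%MS.
Proof.
apply: submx_trans (capmxMr _ _ _) _; apply: capmxS.
  rewrite addsmxMr addsmxS ?spanS_mulmx_degproj //.
  by apply: submx_trans (capmxMr _ _ _) _; rewrite capmxS ?ker_degproj // spanS_mul.
apply: submx_trans (capmxMr _ _ _) _.
by rewrite capmxS ?mulmx_degproj ?submxMl // -degprojC submxMl.
Qed.

Lemma IpreS_mono S S' : S \subset S' -> (IpreS D B S <= IpreS D B S')%MS.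
Proof. by move=> SS'; rewrite /IpreS capmxS // addsmxS // capmxS // spanSS. Qed.

Lemma Ipre_mono k : (Ipre D B k <= Ipre D B k.+1)%MS.
Proof. exact/IpreS_mono/initB_subS. Qed.

Lemma Ipre_graded k P : (Ipre D B k *m proj P <= Ipre D B k)%MS.
Proof. exact: submx_trans (IpreS_degproj _ _) (IpreS_mono (subsetIl _ _)). Qed.

Lemma Ipre_degproj_off (k : 'I_#|B|) P :
  ~~ P (deg (enum_val k)) -> (Ipre D B k.+1 *m proj P <= Ipre D B k)%MS.
Proof.
move=> Pk; apply: submx_trans (IpreS_degproj _ _) (IpreS_mono _).
apply/subsetP=> x; rewrite initBS !inE => /andP[/predU1P[-> | //] Px].
by rewrite Px in Pk.
Qed.

Lemma Ipre_subcodim1 (k : 'I_#|B|) P :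
  subcodim1 (Ipre D B k *m proj P) (Ipre D B k.+1 *m proj P).
Proof.
rewrite /Ipre initBS.
exact/subcodim1_mulmx/subcodim1_cap/subcodim1_adds/subcodim1_cap/subcodim1_spanS_setU1.
Qed.

Lemma Ipre_stepE (k : 'I_#|B|) d : deg (enum_val k) = d ->
  (Ipre D B k.+1 <= Ipre D B k)%MS =
  (Ipre D B k.+1 *m proj (pred1 d) <= Ipre D B k *m proj (pred1 d))%MS.
Proof.
move=> kd; apply/idP/idP => [/submxMr -> // | sub].
apply: submx_trans (submx_degproj_split _ (pred1 d)) _.
rewrite addsmx_sub (submx_trans sub) ?Ipre_graded //=.
by apply: Ipre_degproj_off; rewrite /= kd eqxx.
Qed.

Lemma Ipre_jump (k : 'I_#|B|) d :
  (\rank (Ipre D B k.+1 *m proj (pred1 d)) - \rank (Ipre D B k *m proj (pred1 d)))%N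
  = bd_essential D B k && (deg (enum_val k) == d).
Proof.
have /andP[s01 r10] := Ipre_subcodim1 k (pred1 d).
have r01 := mxrankS s01.
rewrite /bd_essential Ipre_mono andbT.
have [kd | kd] := eqVneq (deg (enum_val k)) d.
  rewrite (Ipre_stepE kd) -(mxrank_leqif_sup s01).2 andbT.
  case: eqP => /= [-> | ne]; first by rewrite subnn.
  suff -> : \rank (Ipre D B k.+1 *m proj (pred1 d)) =
            (\rank (Ipre D B k *m proj (pred1 d))).+1 by rewrite subSnn.
  by apply/eqP; rewrite eqn_leq r10 ltn_neqAle r01 andbT; apply/eqP.
rewrite andbF; apply/eqP; rewrite subn_eq0 mxrankS // -{1}degproj_id mulmxA submxMr //.
exact: Ipre_degproj_off.
Qed.

Lemma card_bd_essential_rank d :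
  #|[set k : 'I_#|B| | bd_essential D B k && (subdeg deg B k == d)]| =
  (\rank (Ipre D B #|B| *m proj (pred1 d)) - \rank (Ipre D B 0 *m proj (pred1 d)))%N.
Proof.
pose r m := \rank (Ipre D B m *m proj (pred1 d)).
rewrite -[RHS]/(r #|B| - r 0)%N -telescope_sumn_in // => [|m _]; last first.
  exact/mxrankS/submxMr/Ipre_mono.
rewrite -sum1_card big_mkcond big_mkord; apply: eq_bigr => k _.
by rewrite inE /r Ipre_jump; case: (_ && _).
Qed.

Lemma spanSd_degproj S d : spanSd F deg S d = spanS F S *m proj (pred1 d).
Proof. by rewrite spanS_mul; congr spanS; apply/setP=> i; rewrite !inE. Qed.

Lemma spanS_mulmx_degproj1 S d :
  spanS F S *m D *m proj (pred1 d) = spanSd F deg S (d + 1) *m D.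
Proof.
rewrite -mulmxA mulmx_degproj mulmxA spanSd_degproj spanS_mul spanS_mul.
by congr (spanS _ _ *m D); apply/setP=> i; rewrite !inE subr_eq.
Qed.

Lemma Ipre0 : (Ipre D B 0 :=: spanS F B *m D)%MS.
Proof.
apply/eqmxP/andP; rewrite /Ipre initB0 spanS0 cap0mx; split.
  by rewrite (submx_trans (capmxSl _ _)) // addsmx_sub sub0mx /=.
by rewrite !sub_capmx addsmxSr submxMl (spanS_mulmx_closed Bclosed).
Qed.

Lemma Ipre_card : (Ipre D B #|B| :=: D :&: spanS F B)%MS.
Proof.
apply/eqmxP; rewrite /Ipre initB_card capmxSr sub_capmx submx_refl andbT.
apply: submx_trans (addsmxSl _ _); rewrite sub_capmx capmxSr.
by apply/sub_kermxP; case/submxP: (capmxSl D (spanS F B)) => X ->; rewrite -mulmxA DD mulmx0.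
Qed.

Lemma Ipre_card_degproj1 d :
  (Ipre D B #|B| *m proj (pred1 d) :=:
   spanSd F deg setT (d + 1) *m D :&: spanSd F deg B d)%MS.
Proof.
have DP : D *m proj (pred1 d) = spanSd F deg setT (d + 1) *m D.
  by rewrite -spanS_mulmx_degproj1 spanST mul1mx.
apply: eqmx_trans (eqmxMr _ Ipre_card) _; apply/eqmxP/andP; split.
  by apply: submx_trans (capmxMr _ _ _) _; rewrite DP -spanSd_degproj.
set W := (_ :&: _)%MS.
have WP : W *m proj (pred1 d) = W.
  have /submxP[X ->] : (W <= D *m proj (pred1 d))%MS by rewrite DP capmxSl.
  by rewrite -!mulmxA degproj_id.
by rewrite -WP submxMr // capmxS ?DP ?submxMl // spanSd_degproj -degprojC submxMl.
Qed.

Lemma card_bd_essential d :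
  #|[set k : 'I_#|B| | bd_essential D B k && (subdeg deg B k == d)]| =
  conn_image_dim deg D B d.
Proof.
have bd_sub : (spanSd F deg B (d + 1) *m D <= Ipre D B #|B| *m proj (pred1 d))%MS.
  by rewrite -spanS_mulmx_degproj1 submxMr // -Ipre0 IpreS_mono // initB0 sub0set.
rewrite card_bd_essential_rank /conn_image_dim (eqmxMr _ Ipre0) spanS_mulmx_degproj1.
by rewrite (Ipre_card_degproj1 d) (addsmx_idPl _) // -(Ipre_card_degproj1 d).
Qed.

End Filtration.

Definition embB (F : fieldType) n (B : {set 'I_n}) : 'M[F]_(#|B|, n) :=
  rowsub enum_val 1%:M.

Section Restriction.

Variables (F : fieldType) (n : nat) (D : 'M[F]_n) (B : {set 'I_n}).
Hypothesis Bclosed : forall i j, i \in B -> D i j != 0 -> j \in B.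
Local Notation E := (embB F B).
Local Notation DB := (subdiff B D).

Lemma embB_sub : (E <= spanS F B)%MS.
Proof.
apply/sub_spanS=> i x xB; rewrite !mxE.
by have [ix | _] := eqVneq (enum_val i) x; rewrite // -ix enum_valP in xB.
Qed.

Lemma embB_mul_tr : E *m E^T = 1%:M.
Proof.
rewrite trmx_mxsub trmx1 -mxsub_mul mul1mx; apply/matrixP=> i j.
by rewrite !mxE (inj_eq enum_val_inj).
Qed.

Lemma tr_mul_embB : E^T *m E = spanS F B.
Proof.
apply/matrixP=> x y; rewrite /spanS !mxE.
under eq_bigr do rewrite !mxE.
rewrite -(big_enum_val (fun z => (z == x)%:R * (z == y)%:R)) /=.
have [xB | xB] := boolP (x \in B); last first.
  rewrite big1 ?mul0rn // => z zB.
  by have [zx | _] := eqVneq z x; [rewrite -zx zB in xB | rewrite mul0r].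
rewrite (bigD1 x) //= eqxx mul1r big1 ?addr0 => [|z /andP[_ /negbTE->]]; last by rewrite mul0r.
by rewrite eq_sym; case: (y == x).
Qed.

Lemma subdiffE : DB = E *m D *m E^T.
Proof.
rewrite trmx_mxsub trmx1 mulmx_colsub mulmx1 mul_rowsub_mx mul1mx.
by apply/matrixP=> i j; rewrite !mxE.
Qed.

Lemma embB_mulmx : E *m D = DB *m E.
Proof.
have ED : (E *m D <= spanS F B)%MS.
  exact: submx_trans (submxMr D embB_sub) (spanS_mulmx_closed Bclosed).
by rewrite subdiffE -(mulmxA (E *m D)) tr_mul_embB mulmx_spanS_id.
Qed.

Lemma subdiff_sqr0 : D *m D = 0 -> DB *m DB = 0.
Proof.
move=> DD; have DB2E : DB *m DB *m E = 0.
  by rewrite -mulmxA -embB_mulmx mulmxA -embB_mulmx -mulmxA DD mulmx0.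
by rewrite -[DB *m DB]mulmx1 -embB_mul_tr mulmxA DB2E mul0mx.
Qed.

Lemma flag_cycles_embB m :
  (flag_cycles DB m *m E :=: spanS F (initB B m) :&: kermx D)%MS.
Proof.
set Z := (_ :&: _)%MS.
have ZI : (Z <= spanS F (initB B m))%MS := capmxSl _ _.
have ZB : (Z <= spanS F B)%MS := submx_trans ZI (spanSS _ (initB_sub _ _)).
have ZD : Z *m D = 0 by apply/sub_kermxP/capmxSr.
apply/eqmxP/andP; split.
  rewrite sub_capmx; apply/andP; split.
    apply: submx_trans (submxMr _ (capmxSl _ _)) _.
    apply/sub_spanS=> i x xm; rewrite /flagmx mul_diag_mx !mxE inE.
    have [ix | _] := eqVneq (enum_val i) x; last by rewrite mulr0.
    by rewrite -ix mem_initB in xm; rewrite (negbTE xm) mul0r.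
  apply/sub_kermxP; rewrite -mulmxA embB_mulmx mulmxA.
  by have /sub_kermxP-> := capmxSr (flagmx F #|B| m) (kermx DB); rewrite mul0mx.
rewrite -(mulmx_spanS_id ZB) -tr_mul_embB mulmxA submxMr // sub_capmx.
apply/andP; split.
  apply/sub_spanS=> r i; rewrite inE -leqNgt => mi.
  rewrite trmx_mxsub trmx1 mulmx_colsub mulmx1 mxE.
  by move/sub_spanS: ZI; apply; rewrite mem_initB -leqNgt.
apply/sub_kermxP.
by rewrite subdiffE !mulmxA -(mulmxA Z) tr_mul_embB (mulmx_spanS_id ZB) ZD !mul0mx.
Qed.

Lemma bd_essential_essential (deg : 'I_n -> int) (k : 'I_#|B|) :
  D *m D = 0 -> bd_essential D B k -> essential (subdeg deg B) DB k.
Proof.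
move=> DD /negP bdk [j kj]; apply: bdk; rewrite Ipre_mono andbT.
have [P [D1 [[Punit Ptrig _] D1E D1el kjD1]]] : exists P D1,
    [/\ flag_graded_aut (subdeg deg B) P, D1 = invmx P *m DB *m P, elementary D1
      & D1 k j = 1 \/ D1 j k = 1].
  by case: kj => -[P [D1 [? ? ? ?]]]; exists P, D1; split; auto.
have step := flag_cycles_paired (subdiff_sqr0 DD) Punit Ptrig D1E D1el kjD1.
rewrite /Ipre capmxS // addsmx_sub addsmxSr andbT.
rewrite -flag_cycles_embB (submx_trans (submxMr _ step)) // addsmxMr addsmxS //.
  by rewrite flag_cycles_embB.
by rewrite -embB_mulmx submxMr // embB_sub.
Qed.

End Restriction.

Theorem lemma3p3 (F : fieldType) (N : nat) (deg : 'I_N -> int) (D : 'M[F]_N)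
    (B : {set 'I_N}) :
  Mdiff deg D ->
  (forall i j, i \in B -> D i j != 0 -> j \in B) ->
  (forall k : 'I_#|B|, bd_essential D B k -> essential (subdeg deg B) (subdiff B D) k) /\
  (forall d : int,
     #|[set k : 'I_#|B| | bd_essential D B k && (subdeg deg B k == d)]|
       = conn_image_dim deg D B d).
Proof.
case=> DD _ Ddeg Bclosed; split=> [k | d].
  exact: bd_essential_essential.
exact: card_bd_essential.
Qed.
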